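(* Consider the downlink of a multi-RIS multi-user MIMO system in which a base station (BS) with $M$ antennas serves $U_d$ direct users and $K$ blocked users, the $k$-th blocked user ($k\in\{1,\dots,K\}$) being served only through the $k$-th reconfigurable intelligent surface (RIS), which has $N$ elements. Let $\mathbf{H}_k\in\mathbb{C}^{M\times N}$ be the BS–RIS-$k$ channel, $\mathbf{h}_{k,1}=(h_{k,1,1},\dots,h_{k,1,N})^T\in\mathbb{C}^{N}$ the RIS-$k$–user channel, and $\mathbf{h}_{d,u}\in\mathbb{C}^{M}$ the BS–direct-user-$u$ channel, all with complex normal entries, with $\mathbb{E}\{\mathbf{H}_k^H\mathbf{H}_k\}=\mathbf{R}_k$ and $\mathbb{E}\{\mathbf{H}_k^H\mathbf{H}_{k'}\}=\mathbf{0}$ for $k\neq k'$. Let $\boldsymbol{\Phi}_k=\mathrm{diag}(e^{j\phi_{k,1}},\dots,e^{j\phi_{k,N}})$, $\mathbf{g}_{k,1}=\mathbf{H}_k\boldsymbol{\Phi}_k^H\mathbf{h}_{k,1}$, $\mathbf{Q}_1=[\mathbf{g}_{1,1}\ \cdots\ \mathbf{g}_{K,1}\ \mathbf{h}_{d,1}\ \cdots\ \mathbf{h}_{d,U_d}]^H$, and use the zero-forcing beamforming matrix $\mathbf{W}_{\mathrm{ZF}}=\mathbf{Q}_1^H(\mathbf{Q}_1\mathbf{Q}_1^H)^{-1}$ (with $M\ge K+U_d$), so that the SINR of the blocked user served by RIS $k$ is $$\mathrm{SINR}_{b,k,1}=\frac{\big|\mathbf{h}_{k,1}^H\boldsymbol{\Phi}_k\mathbf{H}_k^H\mathbf{Q}_1^H(\mathbf{Q}_1\mathbf{Q}_1^H)^{-1}\mathbf{e}_k\big|^2}{\sigma^2_{k,1}},$$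 where $\mathbf{e}_k$ is the $k$-th standard unit vector and $\sigma^2_{k,1}>0$ the noise power. Then, in the asymptotic regime $M\to\infty$, the phase shifts $\phi_{k,1},\dots,\phi_{k,N}$ of the $k$-th RIS that maximize the SINR of this user can be found by solving the system of equations $$\phi_{k,i}=-\sphericalangle\Big(h_{k,1,i}^{*}\sum_{\ell=1}^{N}R_{k,i,\ell}\,e^{-j\phi_{k,\ell}}\,h_{k,1,\ell}\Big),\qquad i=1,\dots,N,$$ where $R_{k,i,\ell}$ is the $(i,\ell)$ entry of $\mathbf{R}_k$.
   Context: $\sphericalangle(z)$ denotes the argument (phase) of a complex number $z$, and $^*$ denotes complex conjugation, $^H$ conjugate transpose. In the (finite-$M$) setting the SINR-maximizing phases satisfy $\phi_{k,i}=-\sphericalangle\big(h^{*}_{k,1,i}[\mathbf{H}_k^H\mathbf{Q}_1^H(\mathbf{Q}_1\mathbf{Q}_1^H)^{-1}\mathbf{e}_k]_i\big)$; the asymptotic regime $M\to\infty$ refers to the limit in which inner products of BS-side channel columns converge to their expectations, i.e. $\mathbf{H}_k^H\mathbf{H}_n\to\mathbf{R}_k$ if $n=k$ and $\to\mathbf{0}$ if $n\neq k$. *)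

From HB Require Import structures.
From mathcomp Require Import all_boot all_order all_algebra.
From mathcomp Require Import complex.
From mathcomp Require Import all_classical all_reals.
From mathcomp Require Import trigo.
Set Implicit Arguments.
Unset Strict Implicit.
Unset Printing Implicit Defensive.
Import Order.TTheory GRing.Theory Num.Theory.
Local Open Scope ring_scope.
Local Open Scope complex_scope.

Section Defs.
Variable R : realType.
Local Notation C := R[i].

Definition expj (t : R) : C := Complex (cos t) (sin t).

Definition sqmod (z : C) : R := (complex.Re z) ^+ 2 + (complex.Im z) ^+ 2.

(* theta is an argument (phase) of z:  z = |z| e^{j theta}.
   For z = 0 every theta is an argument. The equation "phi = -arg z"
   of the paper is rendered as  is_arg z (- phi)  (phases mod 2 pi). *)
Definition is_arg (z : C) (t : R) : Prop := z = `|z| * expj t.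

Definition adjmx m n (A : 'M[C]_(m, n)) : 'M[C]_(n, m) := (map_mx conjc A)^T.

Definition ris_phase N (phi : 'I_N -> R) : 'M[C]_N :=
  diag_mx (\row_i expj (phi i)).

Definition herm_psd N (A : 'M[C]_N) : Prop :=
  adjmx A = A /\ forall x : 'cV[C]_N, 0 <= complex.Re ((adjmx x *m A *m x) 0 0).

(* Asymptotic (M -> oo) value of  H_k^H Q_1^H e_k-column  :
   H_k^H g_{k,1} -> R_k Phi_k^H h_{k,1}  (all other columns -> 0). *)
Definition asym_HQ N (Rk : 'M[C]_N) (phi : 'I_N -> R) (h : 'cV[C]_N)
  : 'cV[C]_N := Rk *m adjmx (ris_phase phi) *m h.

(* Asymptotic SINR of the blocked user served by RIS k:
   |h^H Phi_k (H_k^H Q_1^H)_asym ((Q_1 Q_1^H)^{-1})_{kk}|^2 / sigma^2,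
   where dkk > 0 is the (k,k) entry of (Q_1 Q_1^H)^{-1}, treated (as in the
   paper) as not depending on Phi_k. *)
Definition sinr_asym N (Rk : 'M[C]_N) (h : 'cV[C]_N) (dkk sigma2 : R)
  (phi : 'I_N -> R) : R :=
  sqmod ((adjmx h *m ris_phase phi *m asym_HQ Rk phi h) 0 0 * dkk%:C)
  / sigma2.

End Defs.

From HB Require Import structures.
From mathcomp Require Import all_boot all_order all_algebra.
From mathcomp Require Import complex.
From mathcomp Require Import all_classical all_reals.
From mathcomp Require Import trigo.
From mathcomp Require Import ring lra.
Import Order.TTheory GRing.Theory Num.Theory.
Local Open Scope ring_scope.
Local Open Scope complex_scope.

Set Implicit Arguments.
Unset Strict Implicit.

(* As M -> oo the SINR is, up to the positive factor dkk^2 / sigma^2, the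
   square of q(phi) = x^H R_k x with x = Phi^H h, a nonnegative real because
   R_k is positive semidefinite; so a maximiser phi maximises q.  Turning only
   the i-th phase by t multiplies x_i by e^{jt} and changes q by
   2 Re((e^{-jt} - 1) c_i), where c_i = x_i^* sum_{l <> i} R_{il} x_l; taking
   t = arg c_i shows that maximality forces c_i >= 0.  Finally
   h_i^* sum_l R_{il} e^{-j phi_l} h_l = e^{-j phi_i} (R_{ii} |x_i|^2 + c_i),
   and the second factor is nonnegative. *)

Section Phases.
Variable R : realType.
Local Notation C := R[i].

Lemma expjD (a b : R) : expj (a + b) = expj a * expj b.
Proof. by rewrite /expj cosD sinD; simpc; rewrite [X in _ +i* X]addrC. Qed.

Lemma expj0 : expj 0 = 1 :> C.
Proof. by rewrite /expj cos0 sin0. Qed.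

Lemma expjN (a : R) : expj (- a) = (expj a)^*%R.
Proof. by rewrite /expj cosN sinN. Qed.

Lemma mul_conj_expj (a : R) : (expj a)^* * expj a = 1.
Proof. by rewrite -expjN -expjD addNr expj0. Qed.

Lemma norm_expj (a : R) : `|expj a| = 1.
Proof. by rewrite /expj; simpc; rewrite cos2Dsin2 sqrtr1. Qed.

Lemma is_arg_expjM (t : R) (r : C) : 0 <= r -> is_arg (expj t * r) t.
Proof. by move=> r0; rewrite /is_arg normrM norm_expj mul1r (ger0_norm r0) mulrC. Qed.

Lemma unit_circle_cos_sin (x y : R) : x ^+ 2 + y ^+ 2 = 1 ->
  exists t, cos t = x /\ sin t = y.
Proof.
move=> xy1.
have x_bound : -1 <= x <= 1.
  rewrite -ler_norml -(ler_pXn2r (isT : 0 < 2)%N) ?nnegrE //.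
  by rewrite real_normK ?num_real // expr1n; nra.
have sin_acos_x : sin (acos x) = `|y|.
  by rewrite sin_acos // -(sqrtr_sqr y); congr Num.sqrt; lra.
have [y0|y0] := leP 0 y.
  by exists (acos x); rewrite acosK ?in_itv //= sin_acos_x ger0_norm.
by exists (- acos x); rewrite cosN sinN acosK ?in_itv //= sin_acos_x ltr0_norm ?opprK.
Qed.

Lemma exists_arg (z : C) : exists t, is_arg z t.
Proof.
have [->|z0] := eqVneq z 0; first by exists 0; rewrite /is_arg normr0 mul0r.
case: z z0 => a b z0; rewrite /is_arg normc_def.
set m := Num.sqrt (a ^+ 2 + b ^+ 2).
have m2 : m ^+ 2 = a ^+ 2 + b ^+ 2 by rewrite sqr_sqrtr // addr_ge0 ?sqr_ge0.
have m_gt0 : 0 < m.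
  rewrite sqrtr_gt0 lt_def addr_ge0 ?sqr_ge0 // andbT.
  by apply: contra z0; rewrite paddr_eq0 ?sqr_ge0 // !sqrf_eq0 => /andP[/eqP-> /eqP->].
have [|t [ct st]] := @unit_circle_cos_sin (a / m) (b / m).
  by rewrite !expr_div_n -mulrDl -m2 divff // sqrf_eq0 gt_eqF.
exists t; rewrite /expj ct st; simpc.
by rewrite !(mulrC m) !divfK ?gt_eqF.
Qed.

Lemma ge0_of_Re_rotation_le (c : C) :
  (forall t, 'Re ((expj t)^* * c) <= 'Re c) -> 0 <= c.
Proof.
(* rotate c onto the nonnegative real axis, where Re c <= |c| is an equality *)
move=> Hmax; have [t ct] := exists_arg c.
have := Hmax t; rewrite {1}ct mulrCA mul_conj_expj mulr1.
have /Creal_ReP -> : `|c| \is Num.real by apply: normr_real.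
have [Re_le_norm <-] := leif_Re_Creal c.
by move=> norm_le_Re; rewrite eq_le Re_le_norm.
Qed.
End Phases.

Section HermitianForm.
Variables (R : realType) (N : nat).
Local Notation C := R[i].
Implicit Types (A : 'M[C]_N) (g : 'I_N -> C) (i : 'I_N).

Definition qform A g : C := \sum_a \sum_b (g a)^* * A a b * g b.

Lemma qform_mx A (x : 'cV[C]_N) :
  (adjmx x *m A *m x) 0 0 = qform A (fun a => x a 0).
Proof.
rewrite /qform mxE exchange_big /=; apply: eq_bigr => b _.
by rewrite mxE mulr_suml; apply: eq_bigr => a _; rewrite /adjmx !mxE.
Qed.

Lemma adjmx_entry A : adjmx A = A -> forall a b, (A a b)^*%R = A b a.
Proof. by move=> AH a b; rewrite -{2}AH /adjmx !mxE. Qed.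

Lemma qform_real A g : adjmx A = A -> qform A g \is Num.real.
Proof.
move=> /adjmx_entry AH; rewrite CrealE; apply/eqP.
rewrite /qform rmorph_sum exchange_big /=.
apply: eq_bigr => b _; rewrite rmorph_sum; apply: eq_bigr => a _.
by rewrite !rmorphM /= conjCK AH mulrC [g b * _]mulrC mulrA.
Qed.

Lemma qform_ge0 A g : herm_psd A -> 0 <= qform A g.
Proof.
move=> [AH Apsd]; have := Apsd (\col_a g a); rewrite qform_mx.
have -> : (fun a => (\col_a g a) a 0) = g by apply/funext => a; rewrite mxE.
by rewrite -(RRe_real (qform_real g AH)) ler0c.
Qed.

Lemma psd_diag_ge0 A i : herm_psd A -> 0 <= A i i.
Proof.
move=> /(qform_ge0 (fun a => (a == i)%:R)).
suff -> : qform A (fun a => (a == i)%:R) = A i i by [].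
rewrite /qform (bigD1 i) //=.
rewrite [X in _ + X]big1 => [|a ai]; last first.
  by rewrite big1 // => b _; rewrite (negPf ai) rmorph0 !mul0r.
rewrite (bigD1 i) //= big1 => [|b bi]; last by rewrite (negPf bi) mulr0.
by rewrite eqxx rmorph1 mul1r mulr1 !addr0.
Qed.

Lemma addCJ (z : C) : z + z^*%R = 'Re z *+ 2.
Proof. by rewrite ReE -mulr_natr divfK ?pnatr_eq0. Qed.

Definition rotate_at g i (w : C) : 'I_N -> C :=
  fun a => if a == i then w * g a else g a.

Definition coupling A g i : C := (g i)^* * \sum_(b | b != i) A i b * g b.

Lemma qform_split A g i : adjmx A = A ->
  qform A g = (g i)^* * A i i * g i + (coupling A g i + (coupling A g i)^*%R)
              + \sum_(a | a != i) \sum_(b | b != i) (g a)^* * A a b * g b.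
Proof.
move=> /adjmx_entry AH.
have split_row a : \sum_b (g a)^* * A a b * g b
    = (g a)^* * A a i * g i + \sum_(b | b != i) (g a)^* * A a b * g b.
  by rewrite (bigD1 i).
rewrite /qform (eq_bigr _ (fun a _ => split_row a)) (bigD1 i) //= big_split /=.
rewrite /coupling rmorphM /= conjCK rmorph_sum /= !mulr_sumr !addrA.
congr (_ + _ + _ + _); first by apply: eq_bigr => b _; rewrite mulrA.
by apply: eq_bigr => a _; rewrite rmorphM /= AH [LHS]mulrC [A a i * _]mulrC.
Qed.

Lemma qform_rotate_at A g i w : adjmx A = A -> w^* * w = 1 ->
  qform A (rotate_at g i w)
  = qform A g + ('Re (w^* * coupling A g i) - 'Re (coupling A g i)) *+ 2.
Proof.
move=> AH ww1; rewrite !(qform_split _ i AH) /rotate_at eqxx.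
have -> : \sum_(a | a != i) \sum_(b | b != i)
    (if a == i then w * g a else g a)^* * A a b * (if b == i then w * g b else g b)
  = \sum_(a | a != i) \sum_(b | b != i) (g a)^* * A a b * g b.
  by apply: eq_bigr => a ai; apply: eq_bigr => b bi; rewrite (negPf ai) (negPf bi).
have -> : coupling A (fun a => if a == i then w * g a else g a) i
        = w^* * coupling A g i.
  rewrite /coupling eqxx rmorphM -mulrA; congr (_ * (_ * _)).
  by apply: eq_bigr => b bi; rewrite (negPf bi).
have -> : (w * g i)^* * A i i * (w * g i) = (g i)^* * A i i * g i.
  by rewrite rmorphM /= -[RHS]mul1r -ww1; ring.
rewrite !addCJ; ring.
Qed.

Lemma coupling_ge0_of_qform_max A g i : adjmx A = A ->
  (forall t : R, qform A (rotate_at g i (expj t)) <= qform A g) ->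
  0 <= coupling A g i.
Proof.
move=> AH qmax; apply: ge0_of_Re_rotation_le => t.
by have := qmax t; rewrite qform_rotate_at ?mul_conj_expj // gerDl pmulrn_lle0 // subr_le0.
Qed.
End HermitianForm.

Section AsymptoticSinr.
Variable R : realType.
Local Notation C := R[i].

Lemma adjmxM m n p (A : 'M[C]_(m, n)) (B : 'M[C]_(n, p)) :
  adjmx (A *m B) = adjmx B *m adjmx A.
Proof. by rewrite /adjmx map_mxM trmx_mul. Qed.

Lemma adjmxK m n (A : 'M[C]_(m, n)) : adjmx (adjmx A) = A.
Proof. by apply/matrixP => i j; rewrite /adjmx !mxE conjcK. Qed.

Variable N : nat.

Definition phase_shifted (phi : 'I_N -> R) (h : 'cV[C]_N) : 'I_N -> C :=
  fun a => expj (- phi a) * h a 0.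

Lemma adj_ris_phase_mulE phi h a :
  (adjmx (ris_phase phi) *m h) a 0 = phase_shifted phi h a.
Proof.
by rewrite /adjmx /ris_phase map_diag_mx tr_diag_mx mul_diag_mx !mxE /phase_shifted expjN.
Qed.

Lemma sinr_asym_qform (Rk : 'M[C]_N) h dkk s phi :
  sinr_asym Rk h dkk s phi = sqmod (qform Rk (phase_shifted phi h) * dkk%:C) / s.
Proof.
rewrite /sinr_asym /asym_HQ.
have -> : adjmx h *m ris_phase phi = adjmx (adjmx (ris_phase phi) *m h).
  by rewrite adjmxM adjmxK.
rewrite -[Rk *m _ *m h]mulmxA mulmxA qform_mx; congr (sqmod (qform _ _ * _) / _).
by apply/funext => a; rewrite adj_ris_phase_mulE.
Qed.

Lemma sqmod_real (x : R) : sqmod x%:C = x ^+ 2.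
Proof. by rewrite /sqmod /= expr0n addr0. Qed.

Lemma qform_le_of_sinr_le (Rk : 'M[C]_N) h dkk s phi psi :
  herm_psd Rk -> 0 < dkk -> 0 < s ->
  sinr_asym Rk h dkk s psi <= sinr_asym Rk h dkk s phi ->
  qform Rk (phase_shifted psi h) <= qform Rk (phase_shifted phi h).
Proof.
move=> Rpsd dkk_gt0 s_gt0; rewrite !sinr_asym_qform.
have qE psi' : qform Rk (phase_shifted psi' h)
               = (complex.Re (qform Rk (phase_shifted psi' h)))%:C.
  by rewrite RRe_real ?ger0_real ?qform_ge0.
have q_ge0 psi' : 0 <= complex.Re (qform Rk (phase_shifted psi' h)).
  by rewrite -ler0c -qE qform_ge0.
rewrite (qE psi) (qE phi) lecR -!rmorphM !sqmod_real.
rewrite (ler_pM2r (_ : 0 < s^-1)) ?invr_gt0 //.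
by rewrite ler_sqr ?nnegrE ?mulr_ge0 ?q_ge0 ?(ltW dkk_gt0) // (ler_pM2r dkk_gt0).
Qed.

Lemma phase_shifted_rotate phi h i t :
  phase_shifted (fun a => if a == i then phi a - t else phi a) h
  = rotate_at (phase_shifted phi h) i (expj t).
Proof.
apply/funext => a; rewrite /phase_shifted /rotate_at.
by case: (a == i) => //; rewrite opprB expjD mulrA.
Qed.

Lemma conj_mul_phase_sum (A : 'M[C]_N) phi h i :
  let g := phase_shifted phi h in
  (h i 0)^* * \sum_(l < N) A i l * expj (- phi l) * h l 0
  = expj (- phi i) * (A i i * (g i * (g i)^*) + coupling A g i).
Proof.
move=> g; have hE : h i 0 = expj (phi i) * g i.
  by rewrite /g /phase_shifted mulrA -expjD subrr expj0 mul1r.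
rewrite (eq_bigr (fun l => A i l * g l)) => [|l _]; last by rewrite -mulrA.
by rewrite (bigD1 i) //= /coupling hE rmorphM /= -expjN; ring.
Qed.
End AsymptoticSinr.

Theorem proposition1 (R : realType) (K N : nat) (k : 'I_K)
    (Rm : 'I_K -> 'M[R[i]]_N) (h1 : 'I_K -> 'cV[R[i]]_N)
    (sigma2 : 'I_K -> R) (dkk : R)
    (HR : forall k', herm_psd (Rm k'))
    (Hsigma : forall k', 0 < sigma2 k')
    (Hd : 0 < dkk)
    (phi : 'I_N -> R)
    (Hmax : forall psi : 'I_N -> R,
        sinr_asym (Rm k) (h1 k) dkk (sigma2 k) psi
        <= sinr_asym (Rm k) (h1 k) dkk (sigma2 k) phi) :
  forall i : 'I_N,
    is_arg ((h1 k i 0)^* *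
            \sum_(l < N) Rm k i l * expj (- phi l) * h1 k l 0)
           (- phi i).
Proof.
move=> i; have [Rk_herm _] := HR k.
pose g := phase_shifted phi (h1 k).
have qmax t : qform (Rm k) (rotate_at g i (expj t)) <= qform (Rm k) g.
  by rewrite -phase_shifted_rotate; apply: qform_le_of_sinr_le (HR k) Hd (Hsigma k) (Hmax _).
rewrite conj_mul_phase_sum; apply: is_arg_expjM; apply: addr_ge0.
  exact: mulr_ge0 (psd_diag_ge0 _ (HR k)) (mul_conjC_ge0 _).
exact: coupling_ge0_of_qform_max Rk_herm qmax.
Qed.
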